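(* Let $\omega>0$, $\bar r>0$, $\bar v>0$ and $T>0$ be such that $e^{AT}\begin{bmatrix}-\bar r\\ \bar v\end{bmatrix}=\begin{bmatrix}\bar r\\ \bar v\end{bmatrix}$, where $A=\begin{bmatrix}0&1\\ \omega^2&0\end{bmatrix}$. Consider the hybrid system with state $(x,\tau)$, $x=(x_p,x_v)\in\mathbb R^2$, $\tau\in\mathbb R$, input $u\in\mathbb R$ and $B=\begin{bmatrix}0\\-\omega^2\end{bmatrix}$: flow: $\dot x=Ax+Bu$, $\dot\tau=1$, for $(x,\tau)\in\mathcal C\times[-T,2T]$; jump: $x^+=x+\begin{bmatrix}-2\bar r\\0\end{bmatrix}$, $\tau^+=\tau-T$, for $(x,\tau)\in\mathcal D\times[-T,2T]$, where $\mathcal C=[-\bar r,\bar r]\times\mathbb R$ and $\mathcal D=\{x\in\mathcal C: x_p=\bar r\}$. Define $x_r(\tau)=e^{A\tau}\begin{bmatrix}-\bar r\\ \bar v\end{bmatrix}$, the error $\varepsilon=(\varepsilon_p,\varepsilon_v)=x-x_r(\tau)$, and $\tau_\varepsilon=T-\tau$. Then $\bar v/\omega-\bar r>0$, and whenever a solution of this hybrid system is at a point $(x,\tau)$ with $x\in\mathcal D$, it holds that $$\tau_\varepsilon=\frac1\omega\ln\big(\eta(\varepsilon_p)\big),\qquad \eta(\varepsilon_p):=\frac{\varepsilon_p-\bar r+\sqrt{\varepsilon_p^2-2\bar r\varepsilon_p+(\bar v/\omega)^2}}{\bar v/\omega-\bar r}.$$ Moreover, $\varepsilon_p\mapsto\frac1\omega\ln(\eta(\varepsilon_p))$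 is an extended class $\mathcal K_\infty$ function on $\mathbb R$; equivalently, $\eta(0)=1$, $\eta$ is strictly increasing, $\lim_{\varepsilon_p\to+\infty}\eta(\varepsilon_p)=+\infty$ and $\lim_{\varepsilon_p\to-\infty}\eta(\varepsilon_p)=0$.
   Context: An extended class $\mathcal K_\infty$ function is a function $\mathbb R\to\mathbb R$ that is continuous, strictly increasing, zero at zero, and unbounded both above and below (tends to $+\infty$ at $+\infty$ and to $-\infty$ at $-\infty$). Solutions of the hybrid system are understood in the standard hybrid-time-domain sense (Goebel–Sanfelice–Teel). *)

From HB Require Import structures.
From mathcomp Require Import all_boot all_order all_algebra.
From mathcomp Require Import all_classical all_reals all_analysis.
Set Implicit Arguments. Unset Strict Implicit. Unset Printing Implicit Defensive.
Import Order.TTheory GRing.Theory Num.Theory.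
Import numFieldNormedType.Exports.
Local Open Scope ring_scope.
Local Open Scope classical_set_scope.

Section Defs.
Variable R : realType.

(* Matrix exponential e^M := sum_k M^k / k!, the limit taken entrywise
   (equivalent to the limit in any norm on the finite-dim space of matrices). *)
Definition expm (n : nat) (M : 'M[R]_n.+1) : 'M[R]_n.+1 :=
  \matrix_(i, j) limn (fun k : nat => (\sum_(l < k) (l`!%:R)^-1 *: M ^+ l) i j).

Definition vec2 (a b : R) : 'cV[R]_2 :=
  \col_(i < 2) (if i == ord0 then a else b).

Definition mat2 (a b c d : R) : 'M[R]_2 :=
  \matrix_(i < 2, j < 2)
    (if i == ord0 then (if j == ord0 then a else b)
                  else (if j == ord0 then c else d)).

Definition xp (x : 'cV[R]_2) : R := x ord0 ord0.
Definition xv (x : 'cV[R]_2) : R := x (lift ord0 ord0) ord0.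

Definition ext_Kinf (f : R -> R) : Prop :=
  continuous f /\
  {homo f : x y / x < y} /\
  f 0 = 0 /\
  (f x @[x --> +oo] --> +oo) /\
  (f x @[x --> -oo] --> -oo).

Definition flowC (rb : R) : set 'cV[R]_2 := [set x | -rb <= xp x <= rb].
Definition jumpD (rb : R) : set 'cV[R]_2 := [set x | flowC rb x /\ xp x = rb].

Definition eta_fun (omega rb vb : R) (e : R) : R :=
  (e - rb + Num.sqrt (e ^+ 2 - 2 * rb * e + (vb / omega) ^+ 2)) / (vb / omega - rb).

End Defs.

(** The matrix [A = [[0, 1]; [w^2, 0]]] has eigenvalues [w] and [-w], so
    [e^(tA) = e^(wt) P + e^(-wt) Q] for its spectral projectors [P], [Q], and the
    reference position is [x_r(t) = - r cosh(wt) + u sinh(wt)] with [u = v/w].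
    The boundary condition [e^(AT) (-r, v) = (r, v)] then reads
    [e^(wT) = (u + r) / (u - r)], which forces [u > r].
    With [c = u^2 - r^2], [eta(e) = p(e - r) / (u - r)] where
    [p(y) = y + sqrt(y^2 + c)] is the positive root [z] of [z^2 - 2yz - c]:
    [p] is an increasing bijection of [R] onto [(0, +oo)] with inverse
    [z |-> (z - c/z) / 2].  On the jump set [e_p - r = - x_r(tau)] is exactly
    [(z - c/z) / 2] for [z = (u + r) e^(-w tau)], so
    [eta(e_p) = e^(w (T - tau))].  The extended class-K_infinity properties of
    [ln eta / w] are inherited from those of [p]. *)

From HB Require Import structures.
From mathcomp Require Import all_boot all_order all_algebra.
From mathcomp Require Import all_classical all_reals all_analysis.
From mathcomp Require Import ring lra.
Import Order.TTheory GRing.Theory Num.Theory.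
Import numFieldNormedType.Exports.
Set Implicit Arguments.
Unset Strict Implicit.

Local Open Scope ring_scope.
Local Open Scope classical_set_scope.

Section Mat2.
Variable R : realType.
Implicit Types a b c d k x y : R.

Lemma mat2_mul a b c d a' b' c' d' :
  mat2 a b c d *m mat2 a' b' c' d' =
  mat2 (a * a' + b * c') (a * b' + b * d') (c * a' + d * c') (c * b' + d * d').
Proof.
apply/matrixP => -[[|[|//]]] ? -[[|[|//]]] ?;
  by rewrite !mxE !big_ord_recr big_ord0 /= !mxE add0r.
Qed.

Lemma mat2D a b c d a' b' c' d' :
  mat2 a b c d + mat2 a' b' c' d' = mat2 (a + a') (b + b') (c + c') (d + d').
Proof. by apply/matrixP => -[[|[|//]]] ? -[[|[|//]]] ?; rewrite !mxE. Qed.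

Lemma mat2Z k a b c d : k *: mat2 a b c d = mat2 (k * a) (k * b) (k * c) (k * d).
Proof. by apply/matrixP => -[[|[|//]]] ? -[[|[|//]]] ?; rewrite !mxE. Qed.

Lemma mat2_0 : 0 = mat2 0 0 0 0 :> 'M[R]_2.
Proof. by apply/matrixP => -[[|[|//]]] ? -[[|[|//]]] ?; rewrite !mxE. Qed.

Lemma mat2_1 : 1 = mat2 1 0 0 1 :> 'M[R]_2.
Proof. by apply/matrixP => -[[|[|//]]] ? -[[|[|//]]] ?; rewrite !mxE. Qed.

Lemma mulmx_mat2_vec2 a b c d x y :
  mat2 a b c d *m vec2 x y = vec2 (a * x + b * y) (c * x + d * y).
Proof.
apply/matrixP => -[[|[|//]]] ? -[[|//]] ?;
  by rewrite !mxE !big_ord_recr big_ord0 /= !mxE add0r.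
Qed.

Lemma xp_vec2 x y : xp (vec2 x y) = x.
Proof. by rewrite /xp mxE. Qed.

Lemma xpB (u v : 'cV[R]_2) : xp (u - v) = xp u - xp v.
Proof. by rewrite /xp !mxE. Qed.

End Mat2.

Section ExpmSpectral.
Variables (R : realType) (n : nat) (P Q : 'M[R]_n.+1).
Hypotheses (PP : P *m P = P) (QQ : Q *m Q = Q) (PQ : P *m Q = 0) (QP : Q *m P = 0)
  (PQ1 : P + Q = 1).

Lemma exprZ_spectral (a b : R) (l : nat) :
  (a *: P + b *: Q) ^+ l = a ^+ l *: P + b ^+ l *: Q.
Proof.
elim: l => [|l IHl]; first by rewrite !expr0 !scale1r.
rewrite exprSr IHl -!mulmxE mulmxDl !mulmxDr -!scalemxAl -!scalemxAr.
by rewrite PP QQ PQ QP !scaler0 addr0 add0r !scalerA -!exprSr.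
Qed.

Lemma expm_spectral (a b : R) :
  expm (a *: P + b *: Q) = expR a *: P + expR b *: Q.
Proof.
apply/matrixP => i j; rewrite /expm !mxE.
have partial_sum k : (\sum_(l < k) (l`!%:R)^-1 *: (a *: P + b *: Q) ^+ l) i j =
    series (exp_coeff a) k * P i j + series (exp_coeff b) k * Q i j.
  rewrite summxE /series /= !big_mkord !mulr_suml -big_split /=.
  by apply: eq_bigr => l _; rewrite exprZ_spectral !mxE /exp_coeff /=; ring.
have cvg_sum : (fun k => series (exp_coeff a) k * P i j + series (exp_coeff b) k * Q i j)
    @ \oo --> expR a * P i j + expR b * Q i j.
  by apply: cvgD; apply: cvgMr_tmp; exact: is_cvg_series_exp_coeff.
by rewrite (funext partial_sum) (cvg_lim _ cvg_sum).
Qed.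

End ExpmSpectral.

Section Hyperbolic.
Variable R : realType.

Definition coshR (x : R) : R := (expR x + expR (- x)) / 2.
Definition sinhR (x : R) : R := (expR x - expR (- x)) / 2.

Lemma expm_hyperbolic (w t : R) : w != 0 ->
  expm (t *: mat2 0 1 (w ^+ 2) 0) =
  mat2 (coshR (t * w)) (sinhR (t * w) / w) (w * sinhR (t * w)) (coshR (t * w)).
Proof.
move=> w_neq0.
(* the spectral projectors of [A] for its eigenvalues [w] and [-w] *)
set P := mat2 (2^-1) ((2 * w)^-1) (w / 2) (2^-1).
set Q := mat2 (2^-1) (- (2 * w)^-1) (- (w / 2)) (2^-1).
have PP : P *m P = P by rewrite mat2_mul; congr mat2; field.
have QQ : Q *m Q = Q by rewrite mat2_mul; congr mat2; field.
have PQ : P *m Q = 0 by rewrite mat2_mul mat2_0; congr mat2; field.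
have QP : Q *m P = 0 by rewrite mat2_mul mat2_0; congr mat2; field.
have PQ1 : P + Q = 1 by rewrite mat2D mat2_1; congr mat2; field.
have -> : t *: mat2 0 1 (w ^+ 2) 0 = (t * w) *: P + (- (t * w)) *: Q.
  by rewrite !mat2Z mat2D; congr mat2; field.
rewrite expm_spectral // !mat2Z mat2D /coshR /sinhR.
by congr mat2; field.
Qed.

Lemma xp_expm_vec2 (w t a b : R) : w != 0 ->
  xp (expm (t *: mat2 0 1 (w ^+ 2) 0) *m vec2 a b) =
  coshR (t * w) * a + sinhR (t * w) * (b / w).
Proof.
by move=> w_neq0; rewrite expm_hyperbolic // mulmx_mat2_vec2 xp_vec2; ring.
Qed.

Lemma hyperbolic_crossing (r u x : R) : 0 < r -> 0 < x ->
  coshR x * - r + sinhR x * u = r -> 0 < u - r /\ (u + r) / (u - r) = expR x.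
Proof.
move=> r_gt0 x_gt0; rewrite /coshR /sinhR expRN.
have E_gt1 : 1 < expR x by rewrite expR_gt1.
set E := expR x in E_gt1 * => crossing.
have E_gt0 : 0 < E := lt_trans ltr01 E_gt1.
have [E_neq0 E1_neq0] : E != 0 /\ E + 1 != 0 by rewrite !gt_eqF ?addr_gt0.
have crossing_factored : (E + 1) * ((u - r) * E - (u + r)) = 0.
  transitivity (2 * E * ((E + E^-1) / 2 * - r + (E - E^-1) / 2 * u - r)).
    by field.
  by rewrite crossing subrr mulr0.
have uE : (u - r) * E = u + r.
  by apply/eqP; rewrite -subr_eq0; apply/eqP/(mulfI E1_neq0); rewrite crossing_factored mulr0.
have gap_gt0 : 0 < u - r.
  have gapE1 : (u - r) * (E - 1) = 2 * r by rewrite mulrBr mulr1 uE; ring.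
  have E1_gt0 : 0 < E - 1 by rewrite subr_gt0.
  by rewrite -(pmulr_lgt0 _ E1_gt0) gapE1 mulr_gt0.
by split=> //; rewrite -uE mulrC mulKf // gt_eqF.
Qed.

End Hyperbolic.

Section PosRoot.
Variables (R : realType) (c : R).
Hypothesis c_gt0 : 0 < c.

Definition posroot (y : R) : R := y + Num.sqrt (y ^+ 2 + c).

Lemma sqr_sqrt_sqrD (y : R) : Num.sqrt (y ^+ 2 + c) ^+ 2 = y ^+ 2 + c.
Proof. by rewrite sqr_sqrtr // addr_ge0 ?sqr_ge0 ?ltW. Qed.

Lemma normr_lt_sqrt_sqrD (y : R) : `|y| < Num.sqrt (y ^+ 2 + c).
Proof. by rewrite -sqrtr_sqr ltr_sqrt ?ltrDl // ltr_pwDr ?sqr_ge0. Qed.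

Lemma posroot_gt0 (y : R) : 0 < posroot y.
Proof.
have := normr_lt_sqrt_sqrD y; have := ler_norm (- y); rewrite normrN /posroot.
lra.
Qed.

Lemma posroot_ge (y : R) : y <= posroot y.
Proof. by rewrite lerDl sqrtr_ge0. Qed.

Lemma posrootMN (y : R) : posroot y * posroot (- y) = c.
Proof.
rewrite /posroot sqrrN; transitivity (Num.sqrt (y ^+ 2 + c) ^+ 2 - y ^+ 2).
  by ring.
by rewrite sqr_sqrt_sqrD addrC addKr.
Qed.

Lemma posrootK (z : R) : 0 < z -> posroot ((z - c / z) / 2) = z.
Proof.
move=> z_gt0; have z_neq0 : z != 0 by rewrite gt_eqF.
rewrite /posroot.
have -> : ((z - c / z) / 2) ^+ 2 + c = ((z + c / z) / 2) ^+ 2 by field.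
rewrite sqrtr_sqr ger0_norm; last by rewrite divr_ge0 ?addr_ge0 ?divr_ge0 ?ltW.
by field.
Qed.

Lemma posroot_homo : {homo posroot : y1 y2 / y1 < y2}.
Proof.
move=> y1 y2 y12; rewrite -subr_gt0.
set s1 := Num.sqrt (y1 ^+ 2 + c); set s2 := Num.sqrt (y2 ^+ 2 + c).
have s12_gt0 : 0 < s1 + s2.
  by rewrite addr_gt0 // (le_lt_trans (normr_ge0 _) (normr_lt_sqrt_sqrD _)).
have posroot_diff : (posroot y2 - posroot y1) * (s1 + s2) =
    (y2 - y1) * (posroot y1 + posroot y2).
  transitivity ((y2 - y1) * (s1 + s2) + (s2 ^+ 2 - s1 ^+ 2)).
    by rewrite /posroot -/s1 -/s2; ring.
  by rewrite !sqr_sqrt_sqrD /posroot -/s1 -/s2; ring.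
rewrite -(pmulr_lgt0 _ s12_gt0) posroot_diff mulr_gt0 ?subr_gt0 //.
by rewrite addr_gt0 ?posroot_gt0.
Qed.

Lemma posroot_continuous : continuous posroot.
Proof.
have sqrD_cont : continuous (fun y : R => y ^+ 2 + c).
  by move=> y; apply: cvgD; [exact: exprn_continuous | exact: cvg_cst].
move=> y; apply: cvgD; first exact: cvg_id.
exact: continuous_comp (sqrD_cont y) (@sqrt_continuous R _).
Qed.

Lemma posroot_cvgy : posroot y @[y --> +oo] --> +oo.
Proof.
by apply: (ger_cvgy _ cvg_id); near=> y; exact: posroot_ge.
Unshelve. all: end_near.
Qed.

Lemma posroot_cvgNy : posroot y @[y --> -oo] --> 0.
Proof.
apply/cvgNy_compNP.
have -> : posroot \o -%R = fun y => c * (posroot y)^-1.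
  by apply/funext => y /=; rewrite -(posrootMN y) mulrAC divff ?mul1r // gt_eqF ?posroot_gt0.
have posrootV_cvg0 : (posroot y)^-1 @[y --> +oo] --> 0.
  by apply/gtr0_cvgV0; [near=> y; exact: posroot_gt0 | exact: posroot_cvgy].
have : c * (posroot y)^-1 @[y --> +oo] --> c * 0 by exact: cvgMl_tmp.
by rewrite mulr0.
Unshelve. all: end_near.
Qed.

End PosRoot.

Definition eta_ru (R : realType) (r u e : R) : R :=
  posroot (u ^+ 2 - r ^+ 2) (e - r) / (u - r).

Lemma eta_funE (R : realType) (w r v : R) : eta_fun w r v = eta_ru r (v / w).
Proof.
apply/funext => e; rewrite /eta_fun /eta_ru /posroot.
by congr (_ / _); congr (_ + Num.sqrt _); ring.
Qed.

Section EtaRu.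
Variables (R : realType) (r u : R).
Hypotheses (r_gt0 : 0 < r) (gap_gt0 : 0 < u - r).

Lemma sqr_gap_gt0 : 0 < u ^+ 2 - r ^+ 2.
Proof. by rewrite subr_sqr mulr_gt0 //; move: r_gt0 gap_gt0; lra. Qed.

Lemma eta_ru_gt0 e : 0 < eta_ru r u e.
Proof. by rewrite divr_gt0 // posroot_gt0 // sqr_gap_gt0. Qed.

Lemma eta_ru_homo : {homo eta_ru r u : a b / a < b}.
Proof.
move=> a b ab; rewrite ltr_pM2r ?invr_gt0 //.
by apply: posroot_homo; [exact: sqr_gap_gt0 | rewrite ltrD2r].
Qed.

Lemma eta_ru_reference t :
  eta_ru r u (r - (coshR t * - r + sinhR t * u)) = (u + r) / (u - r) * expR (- t).
Proof.
have sum_gt0 : 0 < u + r by move: r_gt0 gap_gt0; lra.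
have [sum_neq0 expRt_neq0] : u + r != 0 /\ expR t != 0.
  by rewrite !gt_eqF ?expR_gt0.
set z := (u + r) * expR (- t).
have z_gt0 : 0 < z by rewrite mulr_gt0 ?expR_gt0.
rewrite /eta_ru.
have -> : r - (coshR t * - r + sinhR t * u) - r = (z - (u ^+ 2 - r ^+ 2) / z) / 2.
  by rewrite /z /coshR /sinhR expRN; field; rewrite sum_neq0 expRt_neq0.
by rewrite posrootK ?sqr_gap_gt0 // mulrAC.
Qed.

Lemma eta_ru0 : eta_ru r u 0 = 1.
Proof.
have gap_neq0 : u - r != 0 by rewrite gt_eqF.
rewrite /eta_ru.
have -> : 0 - r = ((u - r) - (u ^+ 2 - r ^+ 2) / (u - r)) / 2 by field.
by rewrite posrootK ?divff ?sqr_gap_gt0.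
Qed.

Lemma eta_ru_continuous : continuous (eta_ru r u).
Proof.
have subr_continuous : continuous (fun e : R => e - r).
  by move=> e; apply: cvgB; [exact: cvg_id | exact: cvg_cst].
move=> e; apply: cvgMr_tmp.
exact: continuous_comp (subr_continuous e) (@posroot_continuous R _ _).
Qed.

Lemma eta_ru_cvgy : eta_ru r u e @[e --> +oo] --> +oo.
Proof.
apply: gt0_cvgMly; first by rewrite invr_gt0.
exact: cvg_comp (cvg_addrr (- r)) (posroot_cvgy _).
Qed.

Lemma eta_ru_cvgNy : eta_ru r u e @[e --> -oo] --> 0.
Proof.
have : eta_ru r u e @[e --> -oo] --> 0 / (u - r).
  apply: cvgMr_tmp; apply: cvg_comp (cvg_addrr_Ny (- r)) _.
  exact: posroot_cvgNy sqr_gap_gt0.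
by rewrite mul0r.
Qed.

End EtaRu.

Lemma ext_Kinf_scale_ln (R : realType) (k : R) (g : R -> R) :
  0 < k -> continuous g -> (forall x, 0 < g x) -> {homo g : x y / x < y} ->
  g 0 = 1 -> g x @[x --> +oo] --> +oo -> g x @[x --> -oo] --> 0 ->
  ext_Kinf (fun x => k * ln (g x)).
Proof.
move=> k_gt0 g_cont g_gt0 g_homo g0 g_cvgy g_cvgNy.
split; [|split; [|split; [|split]]].
- move=> x; apply: cvgMl_tmp.
  exact: continuous_comp (g_cont x) (continuous_ln (g_gt0 x)).
- by move=> x y xy; rewrite ltr_pM2l // ltr_ln ?posrE // g_homo.
- by rewrite g0 ln1 mulr0.
- apply: gt0_cvgMry => //; apply/cvgryPge => A.
  by apply: filterS (cvgry_ge g_cvgy (expR A)) => x gxA; rewrite -ler_expR lnK ?posrE.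
- apply: gt0_cvgMrNy => //; apply/cvgrNyPle => A.
  apply: filterS (cvgr_lt 0 g_cvgNy _ (expR_gt0 A)) => x gxA.
  by rewrite -ler_expR lnK ?posrE // ltW.
Qed.

Theorem proposition1 (R : realType) (omega rb vb T : R) :
  0 < omega -> 0 < rb -> 0 < vb -> 0 < T ->
  expm (T *: mat2 0 1 (omega ^+ 2) 0) *m vec2 (- rb) vb = vec2 rb vb ->
  0 < vb / omega - rb /\
  (forall (x : 'cV[R]_2) (tau : R),
     jumpD rb x -> - T <= tau <= 2 * T ->
     let eps := x - expm (tau *: mat2 0 1 (omega ^+ 2) 0) *m vec2 (- rb) vb in
     T - tau = omega^-1 * ln (eta_fun omega rb vb (xp eps))) /\
  ext_Kinf (fun e : R => omega^-1 * ln (eta_fun omega rb vb e)) /\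
  eta_fun omega rb vb 0 = 1 /\
  {homo eta_fun omega rb vb : a b / a < b} /\
  (eta_fun omega rb vb e @[e --> +oo] --> +oo) /\
  (eta_fun omega rb vb e @[e --> -oo] --> 0).
Proof.
move=> omega_gt0 rb_gt0 vb_gt0 T_gt0 return_to_rb.
have omega_neq0 : omega != 0 by rewrite gt_eqF.
have [gap_gt0 gap_ratio] : 0 < vb / omega - rb /\
    (vb / omega + rb) / (vb / omega - rb) = expR (T * omega).
  apply: hyperbolic_crossing; rewrite ?mulr_gt0 //.
  by have := congr1 (@xp R) return_to_rb; rewrite xp_expm_vec2 // !xp_vec2.
rewrite eta_funE; split=> //; split.
  move=> x tau [_ x_at_rb] _ /=.
  rewrite xpB xp_expm_vec2 // x_at_rb eta_ru_reference // gap_ratio -expRD expRK.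
  by field.
have eta0 : eta_ru rb (vb / omega) 0 = 1 by exact: eta_ru0.
have eta_homo : {homo eta_ru rb (vb / omega) : a b / a < b} by exact: eta_ru_homo.
have eta_cvgy : eta_ru rb (vb / omega) e @[e --> +oo] --> +oo by exact: eta_ru_cvgy.
have eta_cvgNy : eta_ru rb (vb / omega) e @[e --> -oo] --> 0 by exact: eta_ru_cvgNy.
split; last exact: conj eta0 (conj eta_homo (conj eta_cvgy eta_cvgNy)).
apply: ext_Kinf_scale_ln => //; first by rewrite invr_gt0.
- exact: eta_ru_continuous.
- exact: eta_ru_gt0.
Qed.
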